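(* Let $\alpha>0$, $\delta\ge0$ with $\alpha+\delta\le\pi$, and let $f$ be a spectral density on $\Lambda$ such that $f(\lambda)=0$ whenever $e^{i\lambda}\notin\Gamma_{\alpha,\delta}$. Then for every $n\in\mathbb N$, $$\sigma_n^2(f)\le 4c\,(\sin(\alpha/2))^{n-1}(\sin(\alpha/2+\delta))^{n-1},$$ where $c=r(0)=\int_\Lambda f(\lambda)\,d\lambda$.
   Context: $\Lambda=[-\pi,\pi]$. A spectral density is $f\ge0$, $f\in L^1(\Lambda)$, positive on a set of positive measure, with covariances $r(t)=\int_\Lambda e^{-it\lambda}f(\lambda)d\lambda$. $\sigma_n^2(f)=\min_{c_1,\dots,c_n\in\mathbb C}\int_\Lambda|1-\sum_{k=1}^n c_ke^{-ik\lambda}|^2f(\lambda)\,d\lambda$. $\Gamma_{\alpha,\delta}=\{e^{i\theta}:\theta\in[-(\delta+\alpha),-\delta]\cup[\delta,\delta+\alpha]\}$ (two arcs of length $\alpha$ at circular distance $2\delta$; for $\delta=0$ a single arc of length $2\alpha$). *)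

From HB Require Import structures.
From mathcomp Require Import all_boot all_order all_algebra.
From mathcomp Require Import all_classical all_reals all_analysis.
Set Implicit Arguments. Unset Strict Implicit. Unset Printing Implicit Defensive.
Import Order.TTheory GRing.Theory Num.Theory.
Local Open Scope ring_scope.
Local Open Scope classical_set_scope.

Section Defs.
Variable R : realType.

(* Complex coefficients c_k = a k + i b k, k = 1..n (index k : 'I_n stands for k+1).
   e^{-i m l} = cos(m l) - i sin(m l), so
   c_k e^{-ikl} = (a cos + b sin) + i (b cos - a sin). *)
Definition re_err (n : nat) (a b : 'I_n -> R) (l : R) : R :=
  1 - \sum_(k < n) (a k * cos (k.+1%:R * l) + b k * sin (k.+1%:R * l)).
Definition im_err (n : nat) (a b : 'I_n -> R) (l : R) : R :=
  - \sum_(k < n) (b k * cos (k.+1%:R * l) - a k * sin (k.+1%:R * l)).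
Definition err2 (n : nat) (a b : 'I_n -> R) (l : R) : R :=
  re_err a b l ^+ 2 + im_err a b l ^+ 2.

(* sigma_n^2(f) = min over c_1..c_n in C of int_{[-pi,pi]} |1 - sum c_k e^{-ikl}|^2 f(l) dl
   (stated as an infimum in \bar R). *)
Definition sigma2 (n : nat) (f : R -> R) : \bar R :=
  ereal_inf [set y | exists a b : 'I_n -> R,
     y = (\int[lebesgue_measure]_(x in `[(- pi)%R, pi%R]) (err2 a b x * f x)%:E)%E].

Definition in_Gamma (alpha delta l : R) : Prop :=
  exists theta : R,
    (theta \in `[- (delta + alpha), - delta] \/ theta \in `[delta, delta + alpha]) /\
    cos theta = cos l /\ sin theta = sin l.

Definition spectral_density (f : R -> R) : Prop :=
  (forall x, 0 <= f x) /\
  lebesgue_measure.-integrable `[(- pi)%R, pi%R] (fun x => (f x)%:E) /\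
  (0 < lebesgue_measure ([set x | x \in `[(- pi)%R, pi%R]] `&` [set x | (0 < f x)%R]))%E.

End Defs.

From mathcomp Require Import all_boot all_order all_algebra.
From mathcomp Require Import all_classical all_reals all_analysis.
From mathcomp Require Import measurable_realfun ring lra zify.
Import Order.TTheory GRing.Theory Num.Theory.
(* Imported after Num.Theory so that Re and Im denote the projections of R[i]. *)
From mathcomp Require Import complex.
Set Implicit Arguments. Unset Strict Implicit. Unset Printing Implicit Defensive.
Local Open Scope ring_scope.

(* Write w = e^{-il}. On Gamma we have cos l in [cos(delta+alpha), cos delta], i.e.
   x := 2 cos l - 2m lies in [-2s, 2s] for the centre m and the radius
   s = (cos delta - cos(delta+alpha))/2 = sin(alpha/2) sin(alpha/2+delta).
   Since w^2 - 2mw + 1 = w x, the Chebyshev-type polynomials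
     Q_0 = 2, Q_1 = z^2 - 2mz + 1, Q_{k+2} = Q_1 Q_{k+1} - s^2 z^2 Q_k
   satisfy Q_K(w) = w^K T_K(x), where T_K(2 s cos t) = 2 s^K cos(K t); hence
   |Q_K(w)|^2 <= 4 s^(2K) on Gamma, while Q_K has degree 2K and Q_K(0) = 1 (K >= 1).
   Taking K = n/2, the coefficients of Q_K give a predictor with
   |1 - sum c_k w^k|^2 <= 4 s^(2K) <= 4 s^(n-1) wherever f > 0, and integrating this
   pointwise bound against f bounds the infimum sigma_n^2(f). *)

(* The real and imaginary parts of the predictor coefficients c_k = -q_k (k = 1..n)
   read off a polynomial q with q(0) = 1. *)
Definition re_coefs (R : realType) (n : nat) (q : {poly R[i]}) (k : 'I_n) : R :=
  - Re q`_k.+1.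
Definition im_coefs (R : realType) (n : nat) (q : {poly R[i]}) (k : 'I_n) : R :=
  - Im q`_k.+1.
Arguments re_coefs {R} n q k.
Arguments im_coefs {R} n q k.

Section UnitCircle.
Variable R : realType.
Local Open Scope complex_scope.

Definition expNi (l : R) : R[i] := cos l -i* sin l.

Lemma expNi_pow (l : R) (k : nat) :
  expNi l ^+ k = cos (k%:R * l) -i* sin (k%:R * l).
Proof.
elim: k => [|k IH]; first by rewrite expr0 mul0r cos0 sin0 oppr0.
rewrite exprS IH /expNi; simpc.
have -> : k.+1%:R * l = l + k%:R * l by rewrite -natr1 mulrDl mul1r addrC.
by rewrite cosD sinD; congr Complex; ring.
Qed.

(* On the unit circle, w^2 - 2mw + 1 = w (w + 1/w - 2m) = w (2 cos l - 2m). *)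
Lemma expNi_quadratic (m l : R) :
  expNi l ^+ 2 - (2 * m)%:C * expNi l + 1 = expNi l * (2 * cos l - 2 * m)%:C.
Proof.
rewrite expr2 /expNi; simpc; congr Complex; last by ring.
have := cos2Dsin2 l; rewrite !expr2 => h; lra.
Qed.

Lemma sqr_Re_Im_expNi_real (l r : R) (k : nat) :
  Re (expNi l ^+ k * r%:C) ^+ 2 + Im (expNi l ^+ k * r%:C) ^+ 2 = r ^+ 2.
Proof.
rewrite expNi_pow; simpc => /=.
have unit_circle := cos2Dsin2 (k%:R * l).
transitivity (r ^+ 2 * (cos (k%:R * l) ^+ 2 + sin (k%:R * l) ^+ 2)); first ring.
by rewrite unit_circle mulr1.
Qed.

Lemma err2_horner (n : nat) (q : {poly R[i]}) (l : R) :
  (size q <= n.+1)%N -> q`_0 = 1 ->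
  err2 (re_coefs n q) (im_coefs n q) l = Re q.[expNi l] ^+ 2 + Im q.[expNi l] ^+ 2.
Proof.
move=> size_q q0_1; rewrite /err2 (horner_coef_wide _ size_q) big_ord_recl /=.
rewrite q0_1 expr0 mulr1 !raddfD /= !raddf_sum /= add0r.
have termE (k : nat) : q`_k.+1 * expNi l ^+ k.+1 =
    (Re q`_k.+1 * cos (k.+1%:R * l) + Im q`_k.+1 * sin (k.+1%:R * l)) +i*
    (Im q`_k.+1 * cos (k.+1%:R * l) - Re q`_k.+1 * sin (k.+1%:R * l)).
  by rewrite expNi_pow; case: q`_k.+1 => a b /=; simpc; congr Complex; ring.
rewrite /re_err /im_err /re_coefs /im_coefs -sumrN; congr (_ ^+ 2 + _ ^+ 2).
  by congr (_ + _); apply: eq_bigr => i _; rewrite termE /=; ring.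
by rewrite -sumrN; apply: eq_bigr => i _; rewrite termE /=; ring.
Qed.
End UnitCircle.

Section Chebyshev.
Variables (R : realType) (m s : R).
Local Open Scope complex_scope.

(* z^2 - 2mz + 1, whose value at e^{-il} is e^{-il} (2 cos l - 2m). *)
Definition quadP : {poly R[i]} := 'X^2 - ((2 * m)%:C)%:P * 'X + 1.

Fixpoint chebQ (k : nat) : {poly R[i]} * {poly R[i]} :=
  if k is k'.+1 then
    let: (q0, q1) := chebQ k' in (q1, quadP * q1 - ((s ^+ 2)%:C)%:P * 'X^2 * q0)
  else ((2 : R[i])%:P, quadP).

Fixpoint chebT (x : R) (k : nat) : R * R :=
  if k is k'.+1 then let: (t0, t1) := chebT x k' in (t1, x * t1 - s ^+ 2 * t0)
  else (2, x).

Lemma chebQ_coef0 (k : nat) : (chebQ k).2`_0 = 1.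
Proof.
rewrite -horner_coef0; elim: k => [|k IH] /=.
  by rewrite /quadP !hornerE expr0n /= subr0 add0r.
case: (chebQ k) IH => q0 q1 /= IH.
by rewrite !hornerE IH /quadP !hornerE expr0n /= !mulr0 !mul0r !subr0 add0r.
Qed.

Lemma size_mul_le (p q : {poly R[i]}) (i j : nat) :
  (size p <= i.+1)%N -> (size q <= j.+1)%N -> (size (p * q)%R <= (i + j).+1)%N.
Proof.
move=> size_p size_q; apply: leq_trans (size_polyMleq p q) _.
by move: (size p) (size q) size_p size_q => a b; lia.
Qed.

Lemma size_quadP : (size quadP <= 3)%N.
Proof.
rewrite /quadP (leq_trans (size_polyD _ _)) // geq_max size_poly1 andbT.
rewrite (leq_trans (size_polyD _ _)) // geq_max size_polyXn size_polyN /=.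
by rewrite (leq_trans (size_polyMleq _ _)) // size_polyX size_polyC; case: eqP.
Qed.

Lemma size_chebQ (k : nat) :
  (size (chebQ k).1 <= (2 * k).+1)%N /\ (size (chebQ k).2 <= (2 * k + 2).+1)%N.
Proof.
elim: k => [|k IH] /=; first by rewrite size_polyC_leq1 size_quadP.
case: (chebQ k) IH => q0 q1 /= [size_q0 size_q1]; split; first by lia.
have size_sX2 : (size (((s ^+ 2)%:C)%:P * 'X^2)%R <= 3)%N.
  by rewrite (leq_trans (size_polyMleq _ _)) // size_polyXn size_polyC; case: eqP.
rewrite (leq_trans (size_polyD _ _)) // geq_max size_polyN; apply/andP; split.
  by apply: leq_trans (size_mul_le size_quadP size_q1) _; lia.
by apply: leq_trans (size_mul_le size_sX2 size_q0) _; lia.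
Qed.

Lemma horner_chebQ (l : R) (k : nat) : let x := 2 * cos l - 2 * m in
  (chebQ k).1.[expNi l] = expNi l ^+ k * ((chebT x k).1)%:C /\
  (chebQ k).2.[expNi l] = expNi l ^+ k.+1 * ((chebT x k).2)%:C.
Proof.
move=> x; have quadE : quadP.[expNi l] = expNi l * x%:C.
  by rewrite /quadP !hornerE expNi_quadratic.
elim: k => [|k IH] /=; first by split; [rewrite !hornerE rmorph_nat | rewrite expr1 quadE].
case: (chebQ k) (chebT x k) IH => q0 q1 [t0 t1] /= [IH0 IH1]; split => //.
rewrite rmorphB !rmorphM /= hornerD hornerN !hornerM hornerC hornerX IH0 IH1 quadE.
by rewrite !exprS; ring.
Qed.

Lemma chebT_cos (t : R) (k : nat) :
  chebT (2 * s * cos t) k =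
  (2 * s ^+ k * cos (k%:R * t), 2 * s ^+ k.+1 * cos (k.+1%:R * t)).
Proof.
elim: k => [|k IH] /=; first by rewrite mulr1 expr1 mul1r mul0r cos0 mulr1.
rewrite IH; congr pair.
have -> : k%:R * t = k.+1%:R * t - t by rewrite -natr1 mulrDl mul1r addrK.
have -> : k.+2%:R * t = k.+1%:R * t + t by rewrite -natr1 mulrDl mul1r.
by rewrite cosB cosD !exprS; ring.
Qed.

Lemma chebT_bound (x : R) (k : nat) : 0 < s -> `|x| <= 2 * s ->
  (chebT x k).1 ^+ 2 <= 4 * s ^+ (2 * k).
Proof.
move=> s_gt0 x_le; set t := acos (x / (2 * s)).
have two_s_gt0 : 0 < 2 * s by rewrite mulr_gt0.
have x_cos : x = 2 * s * cos t.
  have x_div : `|x / (2 * s)| <= 1.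
    by rewrite normrM normfV [`|2 * s|]gtr0_norm // ler_pdivrMr // mul1r.
  rewrite /t acosK; first by field; rewrite gt_eqF.
  by rewrite in_itv /= -ler_norml.
rewrite x_cos chebT_cos /= mulnC exprM !exprMn.
have cos_sq : cos (k%:R * t) ^+ 2 <= 1.
  by have := cos2Dsin2 (k%:R * t); have := sqr_ge0 (sin (k%:R * t)); lra.
by have := sqr_ge0 (s ^+ k); nra.
Qed.

Definition extremal_poly (K : nat) : {poly R[i]} :=
  if K is 0 then 1 else (chebQ K).1.

Lemma extremal_poly_coef0 (K : nat) : (extremal_poly K)`_0 = 1.
Proof.
case: K => [|K] /=; first by rewrite coef1.
by have := chebQ_coef0 K; case: (chebQ K).
Qed.

Lemma size_extremal_poly (K : nat) : (size (extremal_poly K) <= (2 * K).+1)%N.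
Proof. by case: K => [|K]; [rewrite size_poly1 | case: (size_chebQ K.+1)]. Qed.

Lemma extremal_poly_bound (K : nat) (l : R) :
  0 < s -> `|2 * cos l - 2 * m| <= 2 * s ->
  Re (extremal_poly K).[expNi l] ^+ 2 + Im (extremal_poly K).[expNi l] ^+ 2
  <= 4 * s ^+ (2 * K).
Proof.
move=> s_gt0 x_le; case: K => [|K].
  by rewrite hornerC /= expr1n expr0n /= muln0 expr0; lra.
by rewrite /extremal_poly (horner_chebQ l K.+1).1 sqr_Re_Im_expNi_real chebT_bound.
Qed.
End Chebyshev.

Section Arcs.
Variables (R : realType) (alpha delta : R).

Lemma in_Gamma_cos (l : R) : 0 <= alpha -> 0 <= delta -> alpha + delta <= pi ->
  in_Gamma alpha delta l -> cos (delta + alpha) <= cos l <= cos delta.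
Proof.
move=> alpha_ge0 delta_ge0 arcs_le_pi [th [th_arc [<- _]]].
have cos_arc u : delta <= u <= delta + alpha -> cos (delta + alpha) <= cos u <= cos delta.
  move=> /andP[u_ge u_le].
  have delta_in : delta \in `[0, pi] by rewrite in_itv /=; apply/andP; split; lra.
  have end_in : delta + alpha \in `[0, pi] by rewrite in_itv /=; apply/andP; split; lra.
  have u_in : u \in `[0, pi] by rewrite in_itv /=; apply/andP; split; lra.
  by rewrite !leNgt !ltr_cos // -!leNgt u_ge u_le.
case: th_arc => /set_mem; rewrite /= in_itv /= => /andP[th_ge th_le].
  by rewrite -[cos th]cosN; apply: cos_arc; apply/andP; split; lra.
by apply: cos_arc; apply/andP.
Qed.

Definition arc_center : R := (cos delta + cos (delta + alpha)) / 2.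
Definition arc_radius : R := (cos delta - cos (delta + alpha)) / 2.

Lemma arc_radiusE : arc_radius = sin (alpha / 2) * sin (alpha / 2 + delta).
Proof.
have cos_diff A B : cos (A - B) - cos (A + B) = 2 * sin A * sin B.
  by rewrite cosB cosD; ring.
have e1 : delta = (alpha / 2 + delta) - alpha / 2 by ring.
have e2 : delta + alpha = (alpha / 2 + delta) + alpha / 2 by field.
by rewrite /arc_radius {1}e1 e2 cos_diff; field.
Qed.

Definition Gamma_poly (n : nat) : {poly R[i]} :=
  extremal_poly arc_center arc_radius n./2.
End Arcs.

Lemma err2_Gamma_poly_le (R : realType) (alpha delta l : R) (n : nat) :
  0 < alpha -> 0 <= delta -> alpha + delta <= pi -> in_Gamma alpha delta l ->
  err2 (re_coefs n (Gamma_poly alpha delta n)) (im_coefs n (Gamma_poly alpha delta n)) l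
  <= 4 * sin (alpha / 2) ^+ n.-1 * sin (alpha / 2 + delta) ^+ n.-1.
Proof.
move=> alpha_gt0 delta_ge0 arcs_le_pi l_in.
have sin_a_gt0 : 0 < sin (alpha / 2) by apply: sin_gt0_pi; apply/andP; split; lra.
have sin_b_gt0 : 0 < sin (alpha / 2 + delta) by apply: sin_gt0_pi; apply/andP; split; lra.
have s_gt0 : 0 < arc_radius alpha delta by rewrite arc_radiusE mulr_gt0.
have s_le1 : arc_radius alpha delta <= 1.
  by rewrite arc_radiusE mulr_ile1 ?sin_le1 ?(ltW sin_a_gt0) ?(ltW sin_b_gt0).
have size_q : (size (Gamma_poly alpha delta n) <= n.+1)%N.
  apply: leq_trans (size_extremal_poly _ _ _) _.
  by have := odd_double_half n; case: odd; lia.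
have l_near : `|2 * cos l - 2 * arc_center alpha delta| <= 2 * arc_radius alpha delta.
  have := in_Gamma_cos (ltW alpha_gt0) delta_ge0 arcs_le_pi l_in.
  by rewrite ler_norml /arc_center /arc_radius => /andP[]; lra.
rewrite err2_horner ?extremal_poly_coef0 //.
apply: le_trans (extremal_poly_bound _ s_gt0 l_near) _.
rewrite -mulrA -exprMn -arc_radiusE ler_pM2l //.
apply: ler_wiXn2l (ltW s_gt0) s_le1 _ _ _.
by have := odd_double_half n; case: odd; lia.
Qed.

Section Measurability.
Variable R : realType.
Local Open Scope classical_set_scope.

Lemma measurable_cos_scale (c : R) : measurable_fun setT (fun x : R => cos (c * x)).
Proof.
apply: measurableT_comp (continuous_measurable_fun (@continuous_cos R)) _.
exact: measurable_funM.
Qed.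

Lemma measurable_sin_scale (c : R) : measurable_fun setT (fun x : R => sin (c * x)).
Proof.
apply: measurableT_comp (continuous_measurable_fun (@continuous_sin R)) _.
exact: measurable_funM.
Qed.

Lemma measurable_err2 (n : nat) (a b : 'I_n -> R) : measurable_fun setT (err2 a b).
Proof.
have cos_term (u : R) (k : nat) : measurable_fun setT (fun x : R => u * cos (k%:R * x)).
  by apply: measurable_funM; [exact: measurable_cst | exact: measurable_cos_scale].
have sin_term (u : R) (k : nat) : measurable_fun setT (fun x : R => u * sin (k%:R * x)).
  by apply: measurable_funM; [exact: measurable_cst | exact: measurable_sin_scale].
rewrite /err2; apply: measurable_funD; apply: measurable_funX; rewrite /re_err /im_err.
  apply: measurable_funB; first exact: measurable_cst.
  by apply: measurable_sum => k; apply: measurable_funD.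
by apply: measurable_funN; apply: measurable_sum => k; apply: measurable_funB.
Qed.
End Measurability.

Lemma sigma2_le_uniform (R : realType) (n : nat) (f : R -> R) (a b : 'I_n -> R) (B : R) :
  spectral_density f -> 0 <= B ->
  (forall x, x \in `[(- pi), pi] -> 0 < f x -> err2 a b x <= B) ->
  (sigma2 n f <= B%:E * \int[lebesgue_measure]_(x in `[(- pi)%R, pi%R]) (f x)%:E)%E.
Proof.
move=> [f_ge0 [f_int _]] B_ge0 err_le.
have mfE := measurable_int _ f_int.
have mf : measurable_fun `[(- pi)%R, pi%R] f by apply/measurable_EFinP.
apply: ge_ereal_inf.
exists (\int[lebesgue_measure]_(x in `[(- pi)%R, pi%R]) (err2 a b x * f x)%:E)%E.
  by exists a, b.
rewrite -ge0_integralZl //; last by move=> x _; rewrite lee_fin.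
apply: ge0_le_integral => //.
- by move=> x _; rewrite lee_fin mulr_ge0 // addr_ge0 // sqr_ge0.
- apply/measurable_EFinP; apply: measurable_funM => //.
  exact: measurable_funTS (measurable_err2 a b).
- by apply: emeasurable_funM => //; exact: measurable_cst.
move=> x x_in; rewrite -EFinM lee_fin.
have {}x_in : x \in `[(- pi), pi] by exact: x_in.
have [fx_gt0 | fx_le0] := ltrP 0 (f x).
  by rewrite ler_wpM2r ?(ltW fx_gt0) ?err_le.
suff -> : f x = 0 by rewrite !mulr0.
by apply/eqP; rewrite eq_le fx_le0 f_ge0.
Qed.

Theorem mainTheorem7 (R : realType) (alpha delta : R) (f : R -> R) (n : nat) :
  0 < alpha -> 0 <= delta -> alpha + delta <= pi ->
  spectral_density f ->
  (forall l, l \in `[(- pi), pi] -> ~ in_Gamma alpha delta l -> f l = 0) ->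
  (0 < n)%N ->
  (sigma2 n f <=
     (4 * sin (alpha / 2) ^+ n.-1 * sin (alpha / 2 + delta) ^+ n.-1)%:E *
     \int[lebesgue_measure]_(x in `[(- pi)%R, pi%R]) (f x)%:E)%E.
Proof.
move=> alpha_gt0 delta_ge0 arcs_le_pi f_sd f_supp _.
have sin_a_ge0 : 0 <= sin (alpha / 2) by apply: sin_ge0_pi; apply/andP; split; lra.
have sin_b_ge0 : 0 <= sin (alpha / 2 + delta) by apply: sin_ge0_pi; apply/andP; split; lra.
apply: (sigma2_le_uniform (a := re_coefs n (Gamma_poly alpha delta n))
  (b := im_coefs n (Gamma_poly alpha delta n)) f_sd).
  by rewrite !mulr_ge0 // exprn_ge0.
move=> x x_in fx_gt0; apply: err2_Gamma_poly_le => //.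
by apply: contrapT => x_notin; move: fx_gt0; rewrite f_supp ?ltxx.
Qed.
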